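(* Let $R$ be a ring, $M$ a nonzero left $R$-module, $\Omega$ an infinite set, $N$ either $\bigoplus_{i\in\Omega} M$ or $\prod_{i\in\Omega} M$, and $E=\mathrm{End}_R(N)$. Suppose that $U\subseteq E$ is a subset for which there exists a moiety $\Sigma\subseteq\Omega$ that is full with respect to $U$. Then there exist elements $x,y\in E$ such that $$E = yUy + yUyx + xyUy + xyUyx,$$ that is, every $f\in E$ can be written as $f = y u_1 y + y u_2 y x + x y u_3 y + x y u_4 y x$ for some $u_1,u_2,u_3,u_4\in U$.
   Context: Rings are unital and associative. Endomorphisms are written on the right of their arguments, so the product $fg$ in $E$ means ''first $f$, then $g$''. For $\Sigma\subseteq\Omega$, $M^{\Sigma}$ denotes the $R$-submodule of $N$ consisting of elements supported on the coordinates in $\Sigma$ (so $N = M^{\Sigma}\oplus M^{\Omega\setminus\Sigma}$). For $U\subseteq E$, let $U_{\{\Sigma\}}=\{f\in U : M^{\Sigma}f\subseteq M^{\Sigma},\ M^{\Omega\setminus\Sigma}f\subseteq M^{\Omega\setminus\Sigma}\}$. A subset $\Sigma\subseteq\Omega$ is called full with respect to $U\subseteq E$ if every $R$-endomorphism of $M^{\Sigma}$ is the restriction to $M^{\Sigma}$ of some member of $U_{\{\Sigma\}}$. A subset $\Sigma\subseteq\Omega$ is a moiety if $|\Sigma|=|\Omega|=|\Omega\setminus\Sigma|$. For subsets $A,B\subseteq E$, $A+B=\{a+b : a\in A, b\in B\}$ and $yAy=\{yay : a\in A\}$, etc. *)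

From mathcomp Require Import all_boot all_algebra.
From Stdlib Require Import List.
Set Implicit Arguments. Unset Strict Implicit. Unset Printing Implicit Defensive.
Import GRing.Theory.
Local Open Scope ring_scope.

(* Elements of N are represented as functions Omega -> M.
   dsum = true  : N = direct sum  (finitely supported functions)
   dsum = false : N = direct product (all functions).
   Endomorphisms are maps vec -> vec, considered only on N
   (values outside N are irrelevant; equality of endomorphisms is
   pointwise equality on N). *)
Section Defs.
Variables (R : pzRingType) (M : lmodType R) (Omega : Type).

Definition vec := Omega -> M.

Definition infinite_type : Prop := forall s : list Omega, exists i, ~ List.In i s.

Definition finsupp (v : vec) : Prop :=
  exists s : list Omega, forall i, ~ List.In i s -> v i = 0.

Definition inN (dsum : bool) (v : vec) : Prop := if dsum then finsupp v else True.

Definition supported_on (S : Omega -> Prop) (v : vec) : Prop :=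
  forall i, ~ S i -> v i = 0.

Definition inMS (dsum : bool) (S : Omega -> Prop) (v : vec) : Prop :=
  inN dsum v /\ supported_on S v.

Definition vadd (v w : vec) : vec := fun i => v i + w i.
Definition vscale (a : R) (v : vec) : vec := fun i => a *: v i.

Definition is_endo_on (P : vec -> Prop) (f : vec -> vec) : Prop :=
  (forall v, P v -> P (f v)) /\
  (forall v w, P v -> P w -> f (vadd v w) = vadd (f v) (f w)) /\
  (forall a v, P v -> f (vscale a v) = vscale a (f v)).

Definition inEnd (dsum : bool) (f : vec -> vec) : Prop := is_endo_on (inN dsum) f.

Definition stab_part (dsum : bool) (S : Omega -> Prop) (U : (vec -> vec) -> Prop)
  (f : vec -> vec) : Prop :=
  U f /\ (forall v, inMS dsum S v -> inMS dsum S (f v)) /\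
  (forall v, inMS dsum (fun i => ~ S i) v -> inMS dsum (fun i => ~ S i) (f v)).

Definition full (dsum : bool) (U : (vec -> vec) -> Prop) (S : Omega -> Prop) : Prop :=
  forall g, is_endo_on (inMS dsum S) g ->
    exists u, stab_part dsum S U u /\ forall v, inMS dsum S v -> u v = g v.

Definition moiety (S : Omega -> Prop) : Prop :=
  (exists f : {i | S i} -> Omega, bijective f) /\
  (exists f : {i | ~ S i} -> Omega, bijective f).

End Defs.

From mathcomp Require Import all_boot all_algebra.
From Stdlib Require Import ClassicalEpsilon FunctionalExtensionality ProofIrrelevance List.
Set Implicit Arguments. Unset Strict Implicit. Unset Printing Implicit Defensive.
Local Open Scope ring_scope.
Import GRing.Theory.

(* A moiety S admits an involution p of Omega exchanging S and its complement.
   Take y to be the projection of N onto M^S and x the coordinate permutation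
   induced by p; then 1 = y + x y x on N, so every f in E splits as
   f = y f y + y f x y x + x y x f y + x y x f x y x (composition read left to
   right).  Each of the four maps y h y, for h one of f, f x, x f, x f x, is an
   endomorphism of M^S, hence by fullness agrees on M^S with some u in U. *)

Section Involution.
Variables (Omega : Type) (S : Omega -> Prop).

Lemma involution_of_compl_bij (h : {i | S i} -> {i | ~ S i}) (k : {i | ~ S i} -> {i | S i}) :
  cancel h k -> cancel k h ->
  exists p : Omega -> Omega, involutive p /\ forall i, S (p i) <-> ~ S i.
Proof.
move=> hK kK.
pose p i := match excluded_middle_informative (S i) with
            | left Si => sval (h (exist _ i Si))
            | right nSi => sval (k (exist _ i nSi)) end.
have pS_eq i (Si : S i) : p i = sval (h (exist _ i Si)).
  rewrite /p; case: excluded_middle_informative => [Si'|//].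
  by rewrite (proof_irrelevance _ Si' Si).
have pNS_eq i (nSi : ~ S i) : p i = sval (k (exist _ i nSi)).
  rewrite /p; case: excluded_middle_informative => [//|nSi'].
  by rewrite (proof_irrelevance _ nSi' nSi).
exists p; split=> i; case: (excluded_middle_informative (S i)) => [Si|nSi].
- by rewrite (pS_eq i Si); case E: (h _) => [j nSj] /=; rewrite (pNS_eq j nSj) -E hK.
- by rewrite (pNS_eq i nSi); case E: (k _) => [j Sj] /=; rewrite (pS_eq j Sj) -E kK.
- by rewrite (pS_eq i Si); case: (h _).
- by rewrite (pNS_eq i nSi); case: (k _).
Qed.

Lemma moiety_involution : moiety S ->
  exists p : Omega -> Omega, involutive p /\ forall i, S (p i) <-> ~ S i.
Proof.
move=> [[f1 [g1 f1K g1K]] [f2 [g2 f2K g2K]]].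
exact: involution_of_compl_bij (can_comp g2K f1K) (can_comp g1K f2K).
Qed.

End Involution.

Section Corners.
Variables (R : pzRingType) (M : lmodType R) (Omega : Type) (dsum : bool).

Definition proj (S : Omega -> Prop) (v : vec M Omega) : vec M Omega :=
  fun i => if excluded_middle_informative (S i) then v i else 0.

Definition permv (p : Omega -> Omega) (v : vec M Omega) : vec M Omega :=
  fun i => v (p i).

Lemma is_endo_on_comp (P : vec M Omega -> Prop) (f g : vec M Omega -> vec M Omega) :
  is_endo_on P f -> is_endo_on P g -> is_endo_on P (f \o g).
Proof.
move=> [fP [fD fZ]] [gP [gD gZ]]; split; [|split] => /=.
- by move=> v Pv; apply/fP/gP.
- by move=> v w Pv Pw; rewrite gD // fD //; apply: gP.
- by move=> a v Pv; rewrite gZ // fZ //; apply: gP.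
Qed.

Lemma inEnd_proj (S : Omega -> Prop) : inEnd dsum (proj S).
Proof.
split; [|split].
- move=> v; case: dsum => //= - [s vs]; exists s => i iNs; rewrite /proj.
  by case: excluded_middle_informative => // Si; apply: vs.
- move=> v w _ _; apply: functional_extensionality => i; rewrite /proj /vadd.
  by case: excluded_middle_informative => Si //; rewrite addr0.
- move=> a v _; apply: functional_extensionality => i; rewrite /proj /vscale.
  by case: excluded_middle_informative => Si //; rewrite scaler0.
Qed.

Lemma inEnd_permv (p : Omega -> Omega) : involutive p -> inEnd dsum (permv p).
Proof.
move=> pK; split; [|split] => // v.
case: dsum => //= - [s vs]; exists (map p s) => i iNps; apply: vs => i_s.
by apply: iNps; rewrite -(pK i); apply: in_map.
Qed.

Lemma projK (S : Omega -> Prop) (v : vec M Omega) : proj S (proj S v) = proj S v.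
Proof.
apply: functional_extensionality => i; rewrite /proj.
by case: excluded_middle_informative.
Qed.

Lemma inMS_proj (S : Omega -> Prop) (v : vec M Omega) :
  inN dsum v -> inMS dsum S (proj S v).
Proof.
move=> Nv; split; first exact: (proj1 (inEnd_proj S)).
by move=> i nSi; rewrite /proj; case: excluded_middle_informative.
Qed.

Lemma proj_endo_on (S : Omega -> Prop) (h : vec M Omega -> vec M Omega) :
  inEnd dsum h -> is_endo_on (inMS dsum S) (proj S \o h).
Proof.
move=> hE; have [yhN [yhD yhZ]] := is_endo_on_comp (inEnd_proj S) hE.
split; [|split].
- by move=> v [Nv _]; apply: inMS_proj; apply: (proj1 hE).
- by move=> v w [Nv _] [Nw _]; apply: yhD.
- by move=> a v [Nv _]; apply: yhZ.
Qed.

Definition agrees_on_corner (S : Omega -> Prop) (u h : vec M Omega -> vec M Omega) :=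
  forall w, inN dsum w -> u (proj S w) = proj S (h (proj S w)).

Lemma full_corner (U : (vec M Omega -> vec M Omega) -> Prop) (S : Omega -> Prop)
    (h : vec M Omega -> vec M Omega) :
  full dsum U S -> inEnd dsum h -> exists2 u, U u & agrees_on_corner S u h.
Proof.
move=> USfull hE; have [u [[Uu _] uh]] := USfull _ (proj_endo_on S hE).
by exists u => // w Nw; rewrite uh //; apply: inMS_proj.
Qed.

Section Swap.
Variables (S : Omega -> Prop) (p : Omega -> Omega).
Hypotheses (pK : involutive p) (pS : forall i, S (p i) <-> ~ S i).

Lemma proj_add_swap (v : vec M Omega) :
  v = vadd (proj S v) (permv p (proj S (permv p v))).
Proof.
apply: functional_extensionality => i; rewrite /vadd /proj /permv pK.
case: excluded_middle_informative => Si; case: excluded_middle_informative => Spi.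
- by have := proj1 (pS i) Spi.
- by rewrite addr0.
- by rewrite add0r.
- by case: Spi; apply/pS.
Qed.

Lemma corner_decomposition (f u1 u2 u3 u4 : vec M Omega -> vec M Omega) (v : vec M Omega) :
  inEnd dsum f -> inN dsum v ->
  agrees_on_corner S u1 f -> agrees_on_corner S u2 (permv p \o f) ->
  agrees_on_corner S u3 (f \o permv p) -> agrees_on_corner S u4 (permv p \o f \o permv p) ->
  f v = vadd (vadd (proj S (u1 (proj S v))) (permv p (proj S (u2 (proj S v)))))
             (vadd (proj S (u3 (proj S (permv p v))))
                   (permv p (proj S (u4 (proj S (permv p v)))))).
Proof.
move=> [_ [fD _]] Nv u1f u2f u3f u4f.
have [xN _] := inEnd_permv pK; have [yN _] := inEnd_proj S.
have xNv := xN v Nv; have yNv := yN v Nv; have xyxNv := xN _ (yN _ xNv).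
rewrite u1f // u2f // u3f // u4f //= !projK.
rewrite {1}(proj_add_swap v) fD //.
by rewrite {1}(proj_add_swap (f (proj S v))) {1}(proj_add_swap (f (permv p _))).
Qed.

End Swap.

End Corners.

Theorem lemma1 (R : pzRingType) (M : lmodType R) (Omega : Type) (dsum : bool)
  (U : (vec M Omega -> vec M Omega) -> Prop) :
  (exists m : M, m != 0) ->
  infinite_type Omega ->
  (forall u, U u -> inEnd dsum u) ->
  (exists S : Omega -> Prop, moiety S /\ full dsum U S) ->
  exists x y : vec M Omega -> vec M Omega,
    inEnd dsum x /\ inEnd dsum y /\
    forall f, inEnd dsum f ->
      exists u1 u2 u3 u4, U u1 /\ U u2 /\ U u3 /\ U u4 /\
        forall v, inN dsum v ->
          f v = vadd (vadd (y (u1 (y v)))           (* y u1 y     *)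
                           (x (y (u2 (y v)))))      (* y u2 y x   *)
                     (vadd (y (u3 (y (x v))))       (* x y u3 y   *)
                           (x (y (u4 (y (x v)))))). (* x y u4 y x *)
Proof.
move=> _ _ _ [S [/moiety_involution [p [pK pS]] USfull]].
have xE : inEnd dsum (permv (M:=M) p) by apply: inEnd_permv.
exists (permv p), (proj S); split=> //; split; first exact: inEnd_proj.
move=> f fE.
have [u1 U1 u1f] := full_corner USfull fE.
have [u2 U2 u2f] := full_corner USfull (is_endo_on_comp xE fE).
have [u3 U3 u3f] := full_corner USfull (is_endo_on_comp fE xE).
have [u4 U4 u4f] := full_corner USfull (is_endo_on_comp (is_endo_on_comp xE fE) xE).
exists u1, u2, u3, u4; do 4!split=> //.
by move=> v Nv; apply: (corner_decomposition pK pS fE Nv u1f u2f u3f u4f).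
Qed.
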